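(* Let $1<\alpha<2$, $h>0$, and $(u_k)_{k\in\mathbb{Z}}$ real numbers with $\sum_{k\in\mathbb{Z}}|u_k|(1+|k|)^{1-\alpha}<\infty$. Set $\beta=2-\alpha$ and, for $j\in\mathbb{Z}$, $$I^L_j=h^{\beta}\sum_{m=0}^\infty u_{j-m}v_m^{(\beta)},\qquad I^R_j=h^{\beta}\sum_{m=0}^\infty u_{j+m}v_m^{(\beta)},$$ with $v_m^{(\beta)}$ as defined in the context. Then for every $i\in\mathbb{Z}$, $$-\left[c_L\,\frac{I^L_{i-1}-2I^L_i+I^L_{i+1}}{h^2}+c_R\,\frac{I^R_{i-1}-2I^R_i+I^R_{i+1}}{h^2}\right]=\frac{1}{h^{\alpha}}\sum_{k=-\infty}^{\infty}u_{i+k}\,w_k^{(\alpha)},$$ with $w_k^{(\alpha)}$ as defined in the context, all series converging absolutely.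
   Context: For $\beta>0$: $v_0^{(\beta)}=1/\Gamma(2+\beta)$ and $v_m^{(\beta)}=\big((m+1)^{1+\beta}-2m^{1+\beta}+(m-1)^{1+\beta}\big)/\Gamma(2+\beta)$ for $m\ge1$. For $1<\alpha<2$ and real $\theta$ with $|\theta|\le 2-\alpha$, set $c_L=\sin\frac{(\alpha-\theta)\pi}{2}/\sin(\alpha\pi)$ and $c_R=\sin\frac{(\alpha+\theta)\pi}{2}/\sin(\alpha\pi)$. For integer $n\ge 2$ put $\Delta_n^{(\alpha)}=(n+2)^{3-\alpha}-4(n+1)^{3-\alpha}+6n^{3-\alpha}-4(n-1)^{3-\alpha}+(n-2)^{3-\alpha}$ (with $0^{3-\alpha}=0$). Define $w_k^{(\alpha)}=\frac{-1}{\Gamma(4-\alpha)}\times$: $\Delta^{(\alpha)}_{|k|}\,c_L$ for $k\le -2$; $(3^{3-\alpha}-2^{5-\alpha}+6)c_L+c_R$ for $k=-1$; $(2^{3-\alpha}-4)(c_L+c_R)$ for $k=0$; $(3^{3-\alpha}-2^{5-\alpha}+6)c_R+c_L$ for $k=1$; $\Delta^{(\alpha)}_{k}\,c_R$ for $k\ge 2$. The left side is the central second difference of the discretized Weyl integrals of order $2-\alpha$, approximating the Riesz–Feller derivative $-[c_L\frac{d^2}{dx^2}{}_{-\infty}I_x^{2-\alpha}u+c_R\frac{d^2}{dx^2}{}_xI_{\infty}^{2-\alpha}u]$. *)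

From Stdlib Require Import Reals ZArith.
From Coquelicot Require Import Coquelicot.
Open Scope R_scope.

Definition Gamma (x : R) : R :=
  RInt_gen (fun t => Rpower t (x - 1) * exp (- t)) (at_right 0) (Rbar_locally p_infty).

(* real power on [0,oo) with the convention 0^y = 0 (y > 0 in all uses) *)
Definition rpow (x y : R) : R := if Req_EM_T x 0 then 0 else Rpower x y.

Definition vcoef (beta : R) (m : nat) : R :=
  match m with
  | O => 1 / Gamma (2 + beta)
  | S _ => (rpow (INR m + 1) (1 + beta) - 2 * rpow (INR m) (1 + beta)
            + rpow (INR m - 1) (1 + beta)) / Gamma (2 + beta)
  end.

Definition cL (alpha theta : R) : R := sin ((alpha - theta) * PI / 2) / sin (alpha * PI).
Definition cR (alpha theta : R) : R := sin ((alpha + theta) * PI / 2) / sin (alpha * PI).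

Definition Delta (alpha : R) (n : Z) : R :=
  let p := 3 - alpha in
  let x := IZR n in
  rpow (x + 2) p - 4 * rpow (x + 1) p + 6 * rpow x p - 4 * rpow (x - 1) p + rpow (x - 2) p.

Definition wcoef (alpha theta : R) (k : Z) : R :=
  let p := 3 - alpha in
  let c := (- 1) / Gamma (4 - alpha) in
  if (k <=? -2)%Z then c * (Delta alpha (Z.abs k) * cL alpha theta)
  else if (k =? -1)%Z then
    c * ((rpow 3 p - rpow 2 (5 - alpha) + 6) * cL alpha theta + cR alpha theta)
  else if (k =? 0)%Z then c * ((rpow 2 p - 4) * (cL alpha theta + cR alpha theta))
  else if (k =? 1)%Z then
    c * ((rpow 3 p - rpow 2 (5 - alpha) + 6) * cR alpha theta + cL alpha theta)
  else c * (Delta alpha k * cR alpha theta).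

Definition zabs_summable (f : Z -> R) : Prop :=
  ex_series (fun n : nat => Rabs (f (Z.of_nat n))) /\
  ex_series (fun n : nat => Rabs (f (- Z.of_nat n - 1)%Z)).

Definition zsum (f : Z -> R) : R :=
  Series (fun n : nat => f (Z.of_nat n)) + Series (fun n : nat => f (- Z.of_nat n - 1)%Z).

Definition IweylL (h beta : R) (u : Z -> R) (j : Z) : R :=
  Rpower h beta * Series (fun m : nat => u (j - Z.of_nat m)%Z * vcoef beta m).
Definition IweylR (h beta : R) (u : Z -> R) (j : Z) : R :=
  Rpower h beta * Series (fun m : nat => u (j + Z.of_nat m)%Z * vcoef beta m).

From Pilot Require Import Defs.
From Stdlib Require Import Reals ZArith Lia Lra.
From Coquelicot Require Import Coquelicot.
Open Scope R_scope.

(* By the mean value theorem the second difference of m |-> m^(3-alpha) is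
   O((m+1)^(1-alpha)), so |v_m| <= K (m+1)^(1-alpha); Peetre's inequality
   (1+|m|)^s <= (1+|j|)^(-s) (1+|j-m|)^s for s <= 0 then turns the weighted
   summability of u into absolute convergence of every Weyl sum.  The central
   second difference of j |-> sum_m u_(j-m) v_m is the convolution of u with the
   second difference of v extended by zero to Z; its coefficients, combined with
   cL and cR and the mirror image for the right sum, are exactly the w_k. *)

Lemma rpow_Rpower x y : 0 < x -> rpow x y = Rpower x y.
Proof. intro Hx. unfold rpow. destruct (Req_EM_T x 0); [lra | reflexivity]. Qed.

Lemma rpow_0_l y : rpow 0 y = 0.
Proof. unfold rpow. destruct (Req_EM_T 0 0); [reflexivity | lra]. Qed.

Lemma Rpower_1_l y : Rpower 1 y = 1.
Proof. unfold Rpower. rewrite ln_1, Rmult_0_r. apply exp_0. Qed.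

Lemma Rpower_le_mul_inv a b c y : 0 < a -> 0 < c -> 0 < b <= a * c -> y <= 0 ->
  Rpower a y <= Rpower c (- y) * Rpower b y.
Proof.
  intros Ha Hc Hb Hy.
  assert (Hac : Rpower (a * c) y <= Rpower b y).
  { rewrite <- (Ropp_involutive y), (Rpower_Ropp (a * c)), (Rpower_Ropp b).
    apply Rinv_le_contravar; [apply exp_pos |]. apply Rle_Rpower_l; lra. }
  rewrite <- Rpower_mult_distr in Hac by assumption.
  rewrite Rpower_Ropp.
  assert (Hcy : 0 < Rpower c y) by apply exp_pos.
  apply Rmult_le_reg_l with (Rpower c y); [exact Hcy |].
  rewrite <- Rmult_assoc, Rinv_r by lra. nra.
Qed.

Lemma peetre_ineq s x y : s <= 0 ->
  Rpower (1 + Rabs (x + y)) s <= Rpower (1 + Rabs x) (- s) * Rpower (1 + Rabs y) s.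
Proof.
  intro Hs.
  assert (Hy : Rabs y <= Rabs (x + y) + Rabs x).
  { replace y with ((x + y) + - x) at 1 by ring.
    rewrite <- (Rabs_Ropp x). apply Rabs_triang. }
  pose proof (Rabs_pos x). pose proof (Rabs_pos y). pose proof (Rabs_pos (x + y)).
  apply Rpower_le_mul_inv; [lra | lra | split; nra | exact Hs].
Qed.

(* Mean value theorem three times: the second difference equals
   [p (p-1) z^(p-2) (xi - eta)] with [x - 1 < z < x + 1] and [xi - eta < 2],
   and [x + 1 <= 3 z] because [x >= 2]. *)
Lemma Rpower_second_difference_bound p x : 1 < p < 2 -> 2 <= x ->
  Rabs (Rpower (x + 1) p - 2 * Rpower x p + Rpower (x - 1) p)
    <= 2 * p * (p - 1) * Rpower 3 (2 - p) * Rpower (x + 1) (p - 2).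
Proof.
  intros Hp Hx.
  destruct (MVT_cor2 (fun t => Rpower t p) (fun t => p * Rpower t (p - 1)) x (x + 1))
    as [xi [Exi Hxi]]; [lra | intros c Hc; apply derivable_pt_lim_power; lra |].
  destruct (MVT_cor2 (fun t => Rpower t p) (fun t => p * Rpower t (p - 1)) (x - 1) x)
    as [eta [Eeta Heta]]; [lra | intros c Hc; apply derivable_pt_lim_power; lra |].
  destruct (MVT_cor2 (fun t => Rpower t (p - 1)) (fun t => (p - 1) * Rpower t (p - 1 - 1)) eta xi)
    as [z [Ez Hz]]; [lra | intros c Hc; apply derivable_pt_lim_power; lra |].
  cbv beta in *.
  replace (Rpower (x + 1) p - 2 * Rpower x p + Rpower (x - 1) p)
    with (p * (p - 1) * Rpower z (p - 2) * (xi - eta))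
    by (replace (p - 2) with (p - 1 - 1) by ring; nra).
  assert (Hzb : Rpower z (p - 2) <= Rpower 3 (2 - p) * Rpower (x + 1) (p - 2)).
  { replace (2 - p) with (- (p - 2)) by ring. apply Rpower_le_mul_inv; lra. }
  assert (Hz0 : 0 < Rpower z (p - 2)) by apply exp_pos.
  assert (Hpp : 0 <= p * (p - 1)) by nra.
  rewrite Rabs_right by (apply Rle_ge, Rmult_le_pos; [apply Rmult_le_pos |]; lra).
  apply Rle_trans with (p * (p - 1) * Rpower z (p - 2) * 2).
  - apply Rmult_le_compat_l; [apply Rmult_le_pos |]; lra.
  - replace (2 * p * (p - 1) * Rpower 3 (2 - p) * Rpower (x + 1) (p - 2))
      with (p * (p - 1) * (Rpower 3 (2 - p) * Rpower (x + 1) (p - 2)) * 2) by ring.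
    apply Rmult_le_compat_r; [lra |]. apply Rmult_le_compat_l; assumption.
Qed.

Lemma vcoef_decay alpha : 1 < alpha < 2 ->
  exists K, forall m, Rabs (vcoef (2 - alpha) m) <= K * Rpower (INR m + 1) (1 - alpha).
Proof.
  intros Ha.
  set (p := 1 + (2 - alpha)).
  set (K0 := 2 * p * (p - 1) * Rpower 3 (2 - p)).
  assert (HK0 : 0 <= K0).
  { assert (H3 : 0 < Rpower 3 (2 - p)) by apply exp_pos.
    unfold K0, p in *. apply Rmult_le_pos; [| lra]. nra. }
  set (g := Gamma (2 + (2 - alpha))).
  exists (Rabs (/ g) * (4 + K0)).
  intro m. unfold vcoef. fold g. fold p. unfold Rdiv.
  assert (Hg : 0 <= Rabs (/ g)) by apply Rabs_pos.
  destruct m as [| [| m]].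
  - rewrite Rmult_1_l, Rplus_0_l, Rpower_1_l. nra.
  - rewrite Rabs_mult, Rmult_comm, Rmult_assoc. apply Rmult_le_compat_l; [exact Hg |].
    replace (INR 1) with 1 by reflexivity.
    replace (1 + 1) with 2 by ring. replace (1 - 1) with 0 by ring.
    rewrite rpow_0_l, !rpow_Rpower, Rpower_1_l by lra.
    assert (H2 : Rpower 2 p = 4 * Rpower 2 (1 - alpha)).
    { replace p with (INR 2 + (1 - alpha)) by (unfold p; simpl; ring).
      rewrite Rpower_plus, Rpower_pow by lra. simpl; ring. }
    assert (H1 : 1 <= Rpower 2 p).
    { rewrite <- (Rpower_O 2) by lra. apply Rle_Rpower; unfold p; lra. }
    assert (Hq : 0 < Rpower 2 (1 - alpha)) by apply exp_pos.
    apply Rabs_le; split; nra.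
  - rewrite Rabs_mult, Rmult_comm, Rmult_assoc. apply Rmult_le_compat_l; [exact Hg |].
    set (x := INR (S (S m))).
    assert (Hx : 2 <= x) by (unfold x; rewrite !S_INR; pose proof (pos_INR m); lra).
    rewrite !rpow_Rpower by lra.
    pose proof (Rpower_second_difference_bound p x ltac:(unfold p; lra) Hx) as Hb.
    fold K0 in Hb. replace (p - 2) with (1 - alpha) in Hb by (unfold p; ring).
    assert (Hq : 0 < Rpower (x + 1) (1 - alpha)) by apply exp_pos.
    nra.
Qed.

Lemma ex_series_Rabs_le (a b : nat -> R) :
  (forall n, Rabs (a n) <= b n) -> ex_series b -> ex_series (fun n => Rabs (a n)).
Proof.
  intros Hab Hb. apply (@ex_series_le R_AbsRing R_CompleteNormedModule) with b; [| exact Hb].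
  intro n. change (norm (Rabs (a n))) with (Rabs (Rabs (a n))).
  rewrite Rabs_Rabsolu. apply Hab.
Qed.

Lemma ex_series_Rabs_lin x y (a b : nat -> R) :
  ex_series (fun n => Rabs (a n)) -> ex_series (fun n => Rabs (b n)) ->
  ex_series (fun n => Rabs (x * a n + y * b n)).
Proof.
  intros Ha Hb.
  apply ex_series_Rabs_le with (fun n => Rabs x * Rabs (a n) + Rabs y * Rabs (b n)).
  - intro n. rewrite <- !Rabs_mult. apply Rabs_triang.
  - exact (ex_series_plus _ _ (ex_series_scal_l _ _ Ha) (ex_series_scal_l _ _ Hb)).
Qed.

Lemma Series_lin x y (a b : nat -> R) : ex_series a -> ex_series b ->
  Series (fun n => x * a n + y * b n) = x * Series a + y * Series b.
Proof.
  intros Ha Hb.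
  rewrite Series_plus, !Series_scal_l;
    [reflexivity | exact (ex_series_scal_l _ _ Ha) | exact (ex_series_scal_l _ _ Hb)].
Qed.

Lemma ex_series_Rabs_sdiff (a b c : nat -> R) :
  ex_series (fun n => Rabs (a n)) -> ex_series (fun n => Rabs (b n)) ->
  ex_series (fun n => Rabs (c n)) -> ex_series (fun n => Rabs (a n - 2 * b n + c n)).
Proof.
  intros Ha Hb Hc.
  eapply ex_series_ext;
    [| exact (ex_series_Rabs_lin 1 1 _ _ (ex_series_Rabs_lin 1 (-2) _ _ Ha Hb) Hc)].
  intro n. cbv beta. f_equal. ring.
Qed.

Lemma Series_sdiff (a b c : nat -> R) : ex_series a -> ex_series b -> ex_series c ->
  Series (fun n => a n - 2 * b n + c n) = Series a - 2 * Series b + Series c.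
Proof.
  intros Ha Hb Hc.
  assert (Hab : ex_series (fun n => 1 * a n + -2 * b n)).
  { exact (ex_series_plus _ _ (ex_series_scal_l 1 _ Ha) (ex_series_scal_l (-2) _ Hb)). }
  rewrite (Series_ext _ (fun n => 1 * (1 * a n + -2 * b n) + 1 * c n)) by (intro; ring).
  rewrite !Series_lin by assumption. ring.
Qed.

Lemma Series_support2 (f : nat -> R) : (forall n, (2 <= n)%nat -> f n = 0) ->
  ex_series (fun n => Rabs (f n)) /\ Series f = f 0%nat + f 1%nat.
Proof.
  intro Hf.
  assert (Hex : ex_series (fun n => Rabs (f n))).
  { apply (ex_series_incr_n _ 2).
    eapply ex_series_ext;
      [| exact (ex_series_scal_l 0 _ (ex_series_geom (1 / 2) ltac:(rewrite Rabs_right; lra)))].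
    intro n. cbv beta. rewrite Hf by lia. rewrite Rabs_R0. apply Rmult_0_l. }
  split; [exact Hex |].
  rewrite (Series_incr_n f 2) by (auto; apply ex_series_Rabs, Hex).
  rewrite (Series_ext _ (fun n => 0 * f (2 + n)%nat)) by (intro n; rewrite Hf by lia; ring).
  rewrite Series_scal_l. simpl. ring.
Qed.

Lemma zabs_summable_ext f g :
  (forall k, f k = g k) -> zabs_summable f -> zabs_summable g.
Proof.
  intros Efg [Hp Hn].
  split; [eapply ex_series_ext; [| exact Hp] | eapply ex_series_ext; [| exact Hn]];
    intro n; cbv beta; now rewrite Efg.
Qed.

Lemma zabs_summable_succ f : zabs_summable f -> zabs_summable (fun k => f (k + 1)%Z).
Proof.
  intros [Hp Hn]. split.
  - apply (ex_series_incr_1 _) in Hp. eapply ex_series_ext; [| exact Hp].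
    intro n. cbv beta. do 2 f_equal; lia.
  - apply (ex_series_incr_1 _). eapply ex_series_ext; [| exact Hn].
    intro n. cbv beta. do 2 f_equal; lia.
Qed.

Lemma zabs_summable_pred f : zabs_summable f -> zabs_summable (fun k => f (k - 1)%Z).
Proof.
  intros [Hp Hn]. split.
  - apply (ex_series_incr_1 _). eapply ex_series_ext; [| exact Hp].
    intro n. cbv beta. do 2 f_equal; lia.
  - apply (ex_series_incr_1 _) in Hn. eapply ex_series_ext; [| exact Hn].
    intro n. cbv beta. do 2 f_equal; lia.
Qed.

Lemma zabs_summable_opp f : zabs_summable f -> zabs_summable (fun k => f (- k)%Z).
Proof.
  intros [Hp Hn]. split.
  - apply (ex_series_incr_1 _). eapply ex_series_ext; [| exact Hn].
    intro n. cbv beta. do 2 f_equal; lia.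
  - apply (ex_series_incr_1 _) in Hp. eapply ex_series_ext; [| exact Hp].
    intro n. cbv beta. do 2 f_equal; lia.
Qed.

Lemma zabs_summable_shift f j : zabs_summable f -> zabs_summable (fun k => f (j + k)%Z).
Proof.
  intro Hf.
  assert (Hup : forall n : nat, zabs_summable (fun k => f (Z.of_nat n + k)%Z)).
  { induction n as [| n IH].
    - eapply zabs_summable_ext; [| exact Hf]. intro k; cbv beta; f_equal; lia.
    - eapply zabs_summable_ext; [| exact (zabs_summable_succ _ IH)].
      intro k; cbv beta; f_equal; lia. }
  assert (Hdown : forall n : nat, zabs_summable (fun k => f (- Z.of_nat n + k)%Z)).
  { induction n as [| n IH].
    - eapply zabs_summable_ext; [| exact Hf]. intro k; cbv beta; f_equal; lia.
    - eapply zabs_summable_ext; [| exact (zabs_summable_pred _ IH)].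
      intro k; cbv beta; f_equal; lia. }
  destruct (Z_le_gt_dec 0 j).
  - eapply zabs_summable_ext; [| exact (Hup (Z.to_nat j))]. intro k; cbv beta; f_equal; lia.
  - eapply zabs_summable_ext; [| exact (Hdown (Z.to_nat (- j)))]. intro k; cbv beta; f_equal; lia.
Qed.

Lemma ex_series_Rabs_shift_left f j :
  zabs_summable f -> ex_series (fun m => Rabs (f (j - Z.of_nat m)%Z)).
Proof.
  intro Hf. destruct (zabs_summable_shift _ (- j) (zabs_summable_opp _ Hf)) as [Hp _].
  eapply ex_series_ext; [| exact Hp]. intro n. cbv beta. do 2 f_equal; lia.
Qed.

Lemma zabs_summable_lin x y f g : zabs_summable f -> zabs_summable g ->
  zabs_summable (fun k => x * f k + y * g k).
Proof. intros [Hf1 Hf2] [Hg1 Hg2]. split; apply ex_series_Rabs_lin; assumption. Qed.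

Lemma zsum_ext f g : (forall k, f k = g k) -> zsum f = zsum g.
Proof. intro Efg. unfold zsum. f_equal; apply Series_ext; intro n; apply Efg. Qed.

Lemma zsum_lin x y f g : zabs_summable f -> zabs_summable g ->
  zsum (fun k => x * f k + y * g k) = x * zsum f + y * zsum g.
Proof.
  intros [Hf1 Hf2] [Hg1 Hg2]. unfold zsum.
  rewrite !Series_lin by (apply ex_series_Rabs; assumption). ring.
Qed.

Lemma zsum_opp f : zabs_summable f -> zsum (fun k => f (- k)%Z) = zsum f.
Proof.
  intro Hf. destruct (zabs_summable_opp f Hf) as [Ho _]. destruct Hf as [Hp _].
  unfold zsum.
  rewrite (Series_incr_1 (fun n => f (- Z.of_nat n)%Z)) by exact (ex_series_Rabs _ Ho).
  rewrite (Series_incr_1 (fun n => f (Z.of_nat n))) by exact (ex_series_Rabs _ Hp).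
  rewrite (Series_ext (fun n => f (- (- Z.of_nat n - 1))%Z) (fun n => f (Z.of_nat (S n))))
    by (intro n; f_equal; lia).
  rewrite (Series_ext (fun n => f (- Z.of_nat n - 1)%Z) (fun n => f (- Z.of_nat (S n))%Z))
    by (intro n; f_equal; lia).
  simpl (Z.of_nat 0). simpl (- 0)%Z. ring.
Qed.

Lemma ex_series_conv_left (u : Z -> R) (v : nat -> R) s K j : s <= 0 ->
  (forall m, Rabs (v m) <= K * Rpower (INR m + 1) s) ->
  zabs_summable (fun k => u k * Rpower (1 + IZR (Z.abs k)) s) ->
  ex_series (fun m => Rabs (u (j - Z.of_nat m)%Z * v m)).
Proof.
  intros Hs Hv Hu.
  assert (HK : 0 <= K).
  { specialize (Hv 0%nat). rewrite Rplus_0_l, Rpower_1_l in Hv.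
    pose proof (Rabs_pos (v 0%nat)). lra. }
  set (C := Rpower (1 + Rabs (IZR j)) (- s)).
  apply ex_series_Rabs_le with (fun m =>
    K * C * Rabs (u (j - Z.of_nat m)%Z * Rpower (1 + IZR (Z.abs (j - Z.of_nat m))) s)).
  - intro m.
    assert (Hw : Rpower (INR m + 1) s
                 <= C * Rpower (1 + IZR (Z.abs (j - Z.of_nat m))) s).
    { pose proof (peetre_ineq s (- IZR j) (IZR j - INR m) Hs) as P.
      rewrite Rabs_Ropp in P.
      replace (- IZR j + (IZR j - INR m)) with (- INR m) in P by ring.
      rewrite Rabs_Ropp, Rabs_right in P by (apply Rle_ge, pos_INR).
      rewrite abs_IZR, minus_IZR, <- INR_IZR_INZ, Rplus_comm. exact P. }
    assert (Hp : 0 < Rpower (1 + IZR (Z.abs (j - Z.of_nat m))) s) by apply exp_pos.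
    rewrite !Rabs_mult, (Rabs_right (Rpower _ _)) by lra.
    pose proof (Rabs_pos (u (j - Z.of_nat m)%Z)).
    apply Rle_trans with (Rabs (u (j - Z.of_nat m)%Z) * (K * Rpower (INR m + 1) s)).
    + apply Rmult_le_compat_l; auto.
    + set (P := Rpower (1 + IZR (Z.abs (j - Z.of_nat m))) s) in *.
      replace (K * C * (Rabs (u (j - Z.of_nat m)%Z) * P))
        with (Rabs (u (j - Z.of_nat m)%Z) * (K * (C * P))) by ring.
      apply Rmult_le_compat_l; [assumption |]. apply Rmult_le_compat_l; assumption.
  - exact (ex_series_scal_l (K * C) _ (ex_series_Rabs_shift_left _ j Hu)).
Qed.

Lemma ex_series_conv_right (u : Z -> R) (v : nat -> R) s K j : s <= 0 ->
  (forall m, Rabs (v m) <= K * Rpower (INR m + 1) s) ->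
  zabs_summable (fun k => u k * Rpower (1 + IZR (Z.abs k)) s) ->
  ex_series (fun m => Rabs (u (j + Z.of_nat m)%Z * v m)).
Proof.
  intros Hs Hv Hu.
  assert (Hr : zabs_summable (fun k => u (- k)%Z * Rpower (1 + IZR (Z.abs k)) s)).
  { eapply zabs_summable_ext; [| exact (zabs_summable_opp _ Hu)].
    intro k. cbv beta. now rewrite Z.abs_opp. }
  eapply ex_series_ext; [| exact (ex_series_conv_left _ v s K (- j) Hs Hv Hr)].
  intro m. cbv beta. do 3 f_equal; lia.
Qed.

Definition zext (v : nat -> R) (k : Z) : R := if (k <? 0)%Z then 0 else v (Z.to_nat k).

Definition sdiff_kernel (v : nat -> R) (k : Z) : R :=
  zext v (1 - k) - 2 * zext v (- k) + zext v (- k - 1).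

Lemma zext_of_nat v n : zext v (Z.of_nat n) = v n.
Proof. unfold zext. destruct (Z.ltb_spec (Z.of_nat n) 0); [lia |]. now rewrite Nat2Z.id. Qed.

Lemma zext_neg v k : (k < 0)%Z -> zext v k = 0.
Proof. intro Hk. unfold zext. destruct (Z.ltb_spec k 0); [reflexivity | lia]. Qed.

Lemma sdiff_kernel_0 v : sdiff_kernel v 0 = v 1%nat - 2 * v 0%nat.
Proof.
  unfold sdiff_kernel. rewrite (zext_neg v (Z.opp 0 - 1)) by lia.
  change (1 - 0)%Z with (Z.of_nat 1). change (- 0)%Z with (Z.of_nat 0).
  rewrite !zext_of_nat. ring.
Qed.

Lemma sdiff_kernel_1 v : sdiff_kernel v 1 = v 0%nat.
Proof.
  unfold sdiff_kernel. rewrite (zext_neg v (Z.opp 1)), (zext_neg v (Z.opp 1 - 1)) by lia.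
  change (1 - 1)%Z with (Z.of_nat 0). rewrite zext_of_nat. ring.
Qed.

Lemma sdiff_kernel_ge2 v k : (2 <= k)%Z -> sdiff_kernel v k = 0.
Proof. intro Hk. unfold sdiff_kernel. rewrite !zext_neg by lia. ring. Qed.

Lemma sdiff_kernel_neg v n :
  sdiff_kernel v (- Z.of_nat n - 1) = v (S (S n)) - 2 * v (S n) + v n.
Proof.
  unfold sdiff_kernel.
  replace (1 - (- Z.of_nat n - 1))%Z with (Z.of_nat (S (S n))) by lia.
  replace (- (- Z.of_nat n - 1) - 1)%Z with (Z.of_nat n) by lia.
  replace (- (- Z.of_nat n - 1))%Z with (Z.of_nat (S n)) by lia.
  now rewrite !zext_of_nat.
Qed.

Section LeftConvolution.

Variable u : Z -> R.

Lemma ex_series_conv_left_succ (v : nat -> R) :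
  (forall j, ex_series (fun m => Rabs (u (j - Z.of_nat m)%Z * v m))) ->
  forall j, ex_series (fun m => Rabs (u (j - Z.of_nat m)%Z * v (S m))).
Proof.
  intros Hv j. pose proof (proj1 (ex_series_incr_1 _) (Hv (j + 1)%Z)) as Hs.
  eapply ex_series_ext; [| exact Hs].
  intro m. cbv beta. do 3 f_equal; lia.
Qed.

Lemma Series_conv_left_succ (v : nat -> R) j :
  ex_series (fun m => Rabs (u (j - Z.of_nat m)%Z * v m)) ->
  Series (fun m => u (j - Z.of_nat m)%Z * v m)
  = u j * v 0%nat + Series (fun m => u (j - 1 - Z.of_nat m)%Z * v (S m)).
Proof.
  intro Hv. rewrite Series_incr_1 by exact (ex_series_Rabs _ Hv).
  f_equal.
  - now rewrite Z.sub_0_r.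
  - apply Series_ext. intro m. do 2 f_equal; lia.
Qed.

Lemma sdiff_conv_left (v : nat -> R) i :
  (forall j, ex_series (fun m => Rabs (u (j - Z.of_nat m)%Z * v m))) ->
  zabs_summable (fun k => u (i + k)%Z * sdiff_kernel v k) /\
  Series (fun m => u (i - 1 - Z.of_nat m)%Z * v m)
    - 2 * Series (fun m => u (i - Z.of_nat m)%Z * v m)
    + Series (fun m => u (i + 1 - Z.of_nat m)%Z * v m)
  = zsum (fun k => u (i + k)%Z * sdiff_kernel v k).
Proof.
  intro H0.
  pose proof (ex_series_conv_left_succ v H0) as H1.
  pose proof (ex_series_conv_left_succ _ H1) as H2.
  destruct (Series_support2 (fun n => u (i + Z.of_nat n)%Z * sdiff_kernel v (Z.of_nat n)))
    as [Hpos Spos].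
  { intros n Hn. rewrite sdiff_kernel_ge2 by lia. ring. }
  assert (Eneg : forall n,
    u (i + (- Z.of_nat n - 1))%Z * sdiff_kernel v (- Z.of_nat n - 1)
    = u (i - 1 - Z.of_nat n)%Z * v (S (S n)) - 2 * (u (i - 1 - Z.of_nat n)%Z * v (S n))
      + u (i - 1 - Z.of_nat n)%Z * v n).
  { intro n. rewrite sdiff_kernel_neg.
    replace (i + (- Z.of_nat n - 1))%Z with (i - 1 - Z.of_nat n)%Z by lia. ring. }
  split.
  - split; [exact Hpos |].
    eapply ex_series_ext;
      [| exact (ex_series_Rabs_sdiff _ _ _ (H2 (i - 1)%Z) (H1 (i - 1)%Z) (H0 (i - 1)%Z))].
    intro n. cbv beta. now rewrite Eneg.
  - unfold zsum. rewrite Spos, (Series_ext _ _ Eneg).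
    rewrite Series_sdiff by (apply ex_series_Rabs; auto).
    rewrite (Series_conv_left_succ v i (H0 i)), (Series_conv_left_succ v (i + 1) (H0 (i + 1)%Z)).
    replace (i + 1 - 1)%Z with i by lia.
    rewrite (Series_conv_left_succ (fun m => v (S m)) i (H1 i)).
    change (Z.of_nat 0) with 0%Z. change (Z.of_nat 1) with 1%Z.
    rewrite Z.add_0_r, sdiff_kernel_0, sdiff_kernel_1. ring.
Qed.

End LeftConvolution.

Lemma sdiff_conv_right (u : Z -> R) (v : nat -> R) i :
  (forall j, ex_series (fun m => Rabs (u (j + Z.of_nat m)%Z * v m))) ->
  zabs_summable (fun k => u (i + k)%Z * sdiff_kernel v (- k)) /\
  Series (fun m => u (i - 1 + Z.of_nat m)%Z * v m)
    - 2 * Series (fun m => u (i + Z.of_nat m)%Z * v m)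
    + Series (fun m => u (i + 1 + Z.of_nat m)%Z * v m)
  = zsum (fun k => u (i + k)%Z * sdiff_kernel v (- k)).
Proof.
  intro Hv. set (ur := fun k => u (- k)%Z).
  assert (Hr : forall j, ex_series (fun m => Rabs (ur (j - Z.of_nat m)%Z * v m))).
  { intro j. eapply ex_series_ext; [| exact (Hv (- j)%Z)].
    intro m. unfold ur. do 3 f_equal; lia. }
  destruct (sdiff_conv_left ur v (- i) Hr) as [Hs Hz].
  assert (Eopp : forall k, u (i + k)%Z * sdiff_kernel v (- k)
                 = ur (- i + - k)%Z * sdiff_kernel v (- k)).
  { intro k. unfold ur. do 2 f_equal; lia. }
  split.
  - eapply zabs_summable_ext; [| exact (zabs_summable_opp _ Hs)].
    intro k. cbv beta. now rewrite Eopp.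
  - assert (Eser : forall c, Series (fun m => ur (c - Z.of_nat m)%Z * v m)
                             = Series (fun m => u (- c + Z.of_nat m)%Z * v m)).
    { intro c. apply Series_ext. intro m. unfold ur. do 2 f_equal; lia. }
    rewrite (zsum_ext _ _ Eopp), (zsum_opp (fun k => ur (- i + k)%Z * sdiff_kernel v k) Hs).
    rewrite <- Hz, !Eser.
    replace (- (- i - 1))%Z with (i + 1)%Z by lia.
    replace (- (- i + 1))%Z with (i - 1)%Z by lia.
    replace (- - i)%Z with i by lia.
    ring.
Qed.

Lemma vcoef_0 alpha : vcoef (2 - alpha) 0 = / Gamma (4 - alpha).
Proof. unfold vcoef. replace (2 + (2 - alpha)) with (4 - alpha) by ring. unfold Rdiv. ring. Qed.

Lemma vcoef_S alpha m : vcoef (2 - alpha) (S m) =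
  (rpow (INR m + 2) (3 - alpha) - 2 * rpow (INR m + 1) (3 - alpha) + rpow (INR m) (3 - alpha))
  / Gamma (4 - alpha).
Proof.
  unfold vcoef. rewrite S_INR.
  replace (INR m + 1 + 1) with (INR m + 2) by ring.
  replace (INR m + 1 - 1) with (INR m) by ring.
  replace (1 + (2 - alpha)) with (3 - alpha) by ring.
  replace (2 + (2 - alpha)) with (4 - alpha) by ring.
  reflexivity.
Qed.

Lemma vcoef_sdiff_ge2 alpha m :
  vcoef (2 - alpha) (S (S (S m))) - 2 * vcoef (2 - alpha) (S (S m)) + vcoef (2 - alpha) (S m)
  = Defs.Delta alpha (Z.of_nat (S (S m))) / Gamma (4 - alpha).
Proof.
  (* Unqualified [Delta] is Stdlib's discriminant. *)
  rewrite !vcoef_S. unfold Defs.Delta. rewrite <- INR_IZR_INZ, !S_INR.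
  replace (INR m + 1 + 2) with (INR m + 1 + 1 + 1) by ring.
  replace (INR m + 2) with (INR m + 1 + 1) by ring.
  replace (INR m + 1 + 1 - 1) with (INR m + 1) by ring.
  replace (INR m + 1 + 1 - 2) with (INR m) by ring.
  unfold Rdiv. ring.
Qed.

Lemma rpow_2_add2 p : rpow 2 (2 + p) = 4 * rpow 2 p.
Proof.
  rewrite !rpow_Rpower, Rpower_plus by lra.
  replace 2 with (INR 2) at 2 by reflexivity. rewrite Rpower_pow by lra. simpl. ring.
Qed.

Lemma vcoef_sdiff_0 alpha :
  vcoef (2 - alpha) 2 - 2 * vcoef (2 - alpha) 1 + vcoef (2 - alpha) 0
  = (rpow 3 (3 - alpha) - rpow 2 (5 - alpha) + 6) / Gamma (4 - alpha).
Proof.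
  rewrite !vcoef_S, vcoef_0. rewrite S_INR, INR_0.
  replace (0 + 1 + 2) with 3 by ring. replace (0 + 1 + 1) with 2 by ring.
  replace (0 + 2) with 2 by ring. replace (0 + 1) with 1 by ring.
  replace (5 - alpha) with (2 + (3 - alpha)) by ring.
  rewrite rpow_2_add2, rpow_0_l, (rpow_Rpower 1), Rpower_1_l by lra.
  unfold Rdiv. ring.
Qed.

Lemma vcoef_diff_0 alpha :
  vcoef (2 - alpha) 1 - 2 * vcoef (2 - alpha) 0 = (rpow 2 (3 - alpha) - 4) / Gamma (4 - alpha).
Proof.
  rewrite vcoef_S, vcoef_0, INR_0, !Rplus_0_l, rpow_0_l, (rpow_Rpower 1), Rpower_1_l by lra.
  unfold Rdiv. ring.
Qed.

Lemma wcoef_sdiff_kernel alpha theta k :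
  wcoef alpha theta k = - (cL alpha theta * sdiff_kernel (vcoef (2 - alpha)) k
                           + cR alpha theta * sdiff_kernel (vcoef (2 - alpha)) (- k)).
Proof.
  set (v := vcoef (2 - alpha)).
  destruct (Z_le_gt_dec k (-2)) as [Hk | Hk].
  { set (n := Z.to_nat (- k - 2)).
    assert (Ek : k = (- Z.of_nat (S n) - 1)%Z) by lia. clearbody n.
    unfold wcoef. rewrite (proj2 (Z.leb_le k (-2))) by lia.
    rewrite (sdiff_kernel_ge2 v (- k)) by lia.
    replace (Z.abs k) with (Z.of_nat (S (S n))) by lia.
    rewrite Ek, sdiff_kernel_neg. unfold v. rewrite vcoef_sdiff_ge2. unfold Rdiv. ring. }
  destruct (Z_le_gt_dec 2 k) as [Hk' | Hk'].
  { set (n := Z.to_nat (k - 2)).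
    assert (Ek : (- k = - Z.of_nat (S n) - 1)%Z) by lia.
    assert (Ek' : k = Z.of_nat (S (S n))) by lia. clearbody n.
    unfold wcoef.
    destruct (Z.leb_spec k (-2)); [lia |]. destruct (Z.eqb_spec k (-1)); [lia |].
    destruct (Z.eqb_spec k 0); [lia |]. destruct (Z.eqb_spec k 1); [lia |].
    rewrite (sdiff_kernel_ge2 v k), Ek, sdiff_kernel_neg by lia.
    unfold v. rewrite vcoef_sdiff_ge2, <- Ek'. unfold Rdiv. ring. }
  assert (Hk3 : (k = -1 \/ k = 0 \/ k = 1)%Z) by lia.
  destruct Hk3 as [-> | [-> | ->]]; unfold wcoef;
    cbn -[Rplus Rminus Rmult Rdiv Ropp rpow Gamma cL cR].
  - change (sdiff_kernel v (-1)) with (sdiff_kernel v (- Z.of_nat 0 - 1)).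
    change (sdiff_kernel v (- -1)) with (sdiff_kernel v 1).
    rewrite sdiff_kernel_neg, sdiff_kernel_1. unfold v. rewrite vcoef_sdiff_0, vcoef_0.
    unfold Rdiv. ring.
  - rewrite sdiff_kernel_0. unfold v. rewrite vcoef_diff_0. unfold Rdiv. ring.
  - change (sdiff_kernel v (- 1)) with (sdiff_kernel v (- Z.of_nat 0 - 1)).
    rewrite sdiff_kernel_neg, sdiff_kernel_1. unfold v. rewrite vcoef_sdiff_0, vcoef_0.
    unfold Rdiv. ring.
Qed.

Lemma Rpower_2_sub h a : 0 < h -> Rpower h (2 - a) = h ^ 2 / Rpower h a.
Proof.
  intro Hh. replace (2 - a) with (INR 2 + - a) by (simpl; ring).
  rewrite Rpower_plus, Rpower_pow, Rpower_Ropp by exact Hh. reflexivity.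
Qed.

Theorem mainTheorem3 (alpha theta h : R) (u : Z -> R) :
  1 < alpha < 2 ->
  Rabs theta <= 2 - alpha ->
  0 < h ->
  zabs_summable (fun k => u k * Rpower (1 + IZR (Z.abs k)) (1 - alpha)) ->
  let beta := 2 - alpha in
  (forall j : Z, ex_series (fun m : nat => Rabs (u (j - Z.of_nat m)%Z * vcoef beta m))) /\
  (forall j : Z, ex_series (fun m : nat => Rabs (u (j + Z.of_nat m)%Z * vcoef beta m))) /\
  (forall i : Z,
     zabs_summable (fun k => u (i + k)%Z * wcoef alpha theta k) /\
     - (cL alpha theta *
          (IweylL h beta u (i - 1) - 2 * IweylL h beta u i + IweylL h beta u (i + 1)) / h ^ 2
        + cR alpha theta *
          (IweylR h beta u (i - 1) - 2 * IweylR h beta u i + IweylR h beta u (i + 1)) / h ^ 2)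
     = / Rpower h alpha * zsum (fun k => u (i + k)%Z * wcoef alpha theta k)).
Proof.
  intros Ha _ Hh Hu beta. subst beta.
  set (v := vcoef (2 - alpha)).
  destruct (vcoef_decay alpha Ha) as [K Hv].
  assert (Hs : 1 - alpha <= 0) by lra.
  assert (HL := fun j => ex_series_conv_left u v _ K j Hs Hv Hu).
  assert (HR := fun j => ex_series_conv_right u v _ K j Hs Hv Hu).
  split; [exact HL |]. split; [exact HR |]. intro i.
  destruct (sdiff_conv_left u v i HL) as [SL EL].
  destruct (sdiff_conv_right u v i HR) as [SR ER].
  assert (Ew : forall k, u (i + k)%Z * wcoef alpha theta k
    = - cL alpha theta * (u (i + k)%Z * sdiff_kernel v k)
      + - cR alpha theta * (u (i + k)%Z * sdiff_kernel v (- k))).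
  { intro k. rewrite wcoef_sdiff_kernel. fold v. ring. }
  split.
  - eapply zabs_summable_ext; [intro k; symmetry; apply Ew |].
    apply zabs_summable_lin; assumption.
  - rewrite (zsum_ext _ _ Ew), zsum_lin, <- EL, <- ER by assumption.
    unfold IweylL, IweylR. fold v. rewrite Rpower_2_sub by exact Hh.
    assert (Hpa : 0 < Rpower h alpha) by apply exp_pos.
    field. lra.
Qed.
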